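(* Let $t\in\mathbb{N}$ be a constant, let $n=2^m$, and let $\beta=\log_2\sqrt[t+1]{2^{t+1}-1}$. Then the running time of $\mathrm{cover}(\mathbf{v},r)$ (described in the context) on inputs $\mathbf{v}\in\mathbb{F}_2^{t\times n}$ is: $O(n^{t+1})$ when $r$ is constant; $O(n^{(t+1)(1-\alpha\beta)})$ when $r=\alpha m$ with $0<\alpha<\frac{t}{(t+1)\beta}$ constant; and $O(n\log n)$ when $r=m-s$ with $s$ constant, or when $r=\alpha m$ with $\frac{t}{(t+1)\beta}\leq \alpha<1$ constant.
   Context: For a $t\times n$ binary matrix $\mathbf{v}$ with rows $\overline{v}_1,\dots,\overline{v}_t$, $\mathrm{wt}^{(t)}(\mathbf{v})=\left|\bigcup_{i} \mathrm{supp}(\overline{v}_i)\right|$ and $d^{(t)}(\mathbf{u},\mathbf{v})=\mathrm{wt}^{(t)}(\mathbf{u}-\mathbf{v})$. For a linear code $C\subseteq\mathbb{F}_2^n$, $C^t$ is the set of $t\times n$ matrices all of whose rows lie in $C$. Reed–Muller codes: $\mathrm{RM}(0,m)=\{\overline{0},\overline{1}\}\subseteq\mathbb{F}_2^{2^m}$, $\mathrm{RM}(m,m)=\mathbb{F}_2^{2^m}$, and for $1\leq r\leq m-1$, $\mathrm{RM}(r,m)=\{(\overline{u},\overline{u}+\overline{v}) : \overline{u}\in \mathrm{RM}(r,m-1),\ \overline{v}\in\mathrm{RM}(r-1,m-1)\}$. The algorithm: $\mathrm{recursive}(\mathbf{v},r)$, for $\mathbf{v}\in\mathbb{F}_2^{t\times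 2^m}$ and $1\le r\le m$: if $r=m$, return $\mathbf{v}$; if $r=1$, return a matrix $\mathbf{c}\in\mathrm{RM}(1,m)^t$ minimizing $d^{(t)}(\mathbf{v},\mathbf{c})$, found by exhaustively computing $d^{(t)}(\mathbf{v},\mathbf{c})$ for every $\mathbf{c}\in\mathrm{RM}(1,m)^t$; otherwise write $\mathbf{v}=(\mathbf{v}_1,\mathbf{v}_2)$ with $\mathbf{v}_1,\mathbf{v}_2\in\mathbb{F}_2^{t\times 2^{m-1}}$ (first and second halves of the columns), compute $\mathbf{c}_1=\mathrm{recursive}(\mathbf{v}_1,r)$ and $\mathbf{c}_2=\mathrm{recursive}(\mathbf{v}_2-\mathbf{c}_1,r-1)$, and return $(\mathbf{c}_1,\mathbf{c}_1+\mathbf{c}_2)$. $\mathrm{subadditive}(\mathbf{v},r)$: apply $\mathrm{recursive}$ separately to each row of $\mathbf{v}$ and stack the results. $\mathrm{cover}(\mathbf{v},r)$: compute $\mathrm{recursive}(\mathbf{v},r)$ and $\mathrm{subadditive}(\mathbf{v},r)$ and return whichever is closer to $\mathbf{v}$ in $d^{(t)}$. *)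

From Stdlib Require Import Reals.
From mathcomp Require Import all_boot.

Set Implicit Arguments.
Unset Strict Implicit.
Unset Printing Implicit Defensive.

Definition row := seq bool.
Definition mat := seq row.

(** Row / matrix addition over F_2 (= subtraction). *)
Definition xorr (a b : row) : row := [seq addb x.1 x.2 | x <- zip a b].
Definition madd (u v : mat) : mat := [seq xorr x.1 x.2 | x <- zip u v].

Definition msize (v : mat) : nat := sumn (map size v).

Definition colsupp (v : mat) : row :=
  foldr (fun r acc => [seq x.1 || x.2 | x <- zip r acc])
        (nseq (size (head [::] v)) false) v.

Definition wtt (v : mat) : nat := count (fun b : bool => b) (colsupp v).
Definition distt (u v : mat) : nat := wtt (madd u v).

(** Cost (bit operations) of computing d^(t)(u,v): one pass to form u - v and
    one pass to form the union of supports and count it. *)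
Definition dist_cost (u v : mat) : nat := 2 * msize u.

Fixpoint allwords (k : nat) : seq row :=
  match k with
  | 0 => [:: [::]]
  | k'.+1 => [seq b :: w | b <- [:: false; true], w <- allwords k']
  end.

(** The codewords of RM(r,m), listed via the recursive (u | u+v) definition. *)
Fixpoint rm (r m : nat) : seq row :=
  match m with
  | 0 => allwords 1
  | m'.+1 =>
      if r == 0 then [:: nseq (2 ^ m) false; nseq (2 ^ m) true]
      else if m <= r then allwords (2 ^ m)
      else [seq u ++ xorr u w | u <- rm r m', w <- rm r.-1 m']
  end.

Fixpoint tuples (k : nat) (s : seq row) : seq mat :=
  match k with
  | 0 => [:: [::]]
  | k'.+1 => [seq c :: cs | c <- s, cs <- tuples k' s]
  end.

(** Exhaustive search for the closest element of RM(1,m)^t (t = number of rows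
    of v), returning the result together with its running time: generating the
    code, and for each candidate generating it, computing its d^(t)-distance to
    v and one comparison. *)
Definition exhaustive (m : nat) (v : mat) : mat * nat :=
  let L := 2 ^ m in
  let code := rm 1 m in
  let cands := tuples (size v) code in
  let best := match cands with
              | [::] => v
              | c0 :: cs => foldl (fun b c => if distt v c < distt v b then c else b) c0 cs
              end in
  (best, size code * L + size cands * (3 * size v * L + 1)).

(** recursive(v, r) for v in F_2^{t x 2^m}, instrumented with its running
    time (second component).  Otherwise split, recurse twice, and
    combine; splitting, the two matrix additions and the concatenation cost
    linear time each. *)
Fixpoint recursive (m r : nat) (v : mat) {struct m} : mat * nat :=
  if r == m then (v, msize v) else
  match m with
  | 0 => (v, msize v)
  | m'.+1 =>
      if r == 1 then exhaustive m v else
      let h := 2 ^ m' in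
      let v1 := map (take h) v in
      let v2 := map (drop h) v in
      let (c1, k1) := recursive m' r v1 in
      let (c2, k2) := recursive m' r.-1 (madd v2 c1) in
      ([seq x.1 ++ x.2 | x <- zip c1 (madd c1 c2)], k1 + k2 + 3 * msize v)
  end.

Definition subadditive (m r : nat) (v : mat) : mat * nat :=
  let rs := [seq recursive m r [:: x] | x <- v] in
  (flatten (map fst rs), sumn (map snd rs)).

Definition rm_cover (m r : nat) (v : mat) : mat * nat :=
  let (a, ka) := recursive m r v in
  let (b, kb) := subadditive m r v in
  (if distt v b < distt v a then b else a,
   ka + kb + dist_cost v a + dist_cost v b + 1).

Definition cover_time (m r : nat) (v : mat) : nat := (rm_cover m r v).2.

Definition is_input (t m : nat) (v : mat) : Prop :=
  size v = t /\ all (fun x : row => size x == 2 ^ m) v.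

Local Open Scope R_scope.
Definition log2 (x : R) : R := ln x / ln 2.
Definition beta (t : nat) : R :=
  log2 (Rpower (2 ^ (t + 1) - 1) (/ INR (t + 1))).

(* Write q = 2^(t+1) - 1.  Unrolling the recursion of [recursive] gives
   T(m, r) q^(r-1) <= A 2^(m(t+1)) + 6 t r 2^m q^(r-1): the exhaustive searches at
   the leaves cost A 2^(m'(t+1)) each, and the two recursive calls, weighted by 1
   and q, together reproduce the factor q + 1 = 2^(t+1) that separates consecutive
   levels.  Applying this to the t rows jointly and to each row alone (q = 3), the
   running time of cover on n = 2^m columns is at most
     A n^(t+1) / q^(r-1) + 10 t n^2 / 3^(r-1) + O(t r n).
   As q = 2^((t+1) beta), for r close to alpha m the first term is, up to a
   constant, n^((t+1)(1 - alpha beta)), which exceeds n exactly when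
   alpha < t / ((t+1) beta); each regime is then a comparison of exponents. *)

From Stdlib Require Import Reals Lra Lia.
From mathcomp Require Import all_boot zify.

Set Implicit Arguments.
Unset Strict Implicit.
Unset Printing Implicit Defensive.

Lemma size_allwords k : size (allwords k) = 2 ^ k.
Proof. by elim: k => [|k IH] //=; rewrite cats0 size_cat !size_map IH expnS mul2n addnn. Qed.

Lemma size_rm0 m : size (rm 0 m) = 2.
Proof. by case: m. Qed.

Lemma rmS r m : 0 < r <= m ->
  rm r m.+1 = [seq u ++ xorr u w | u <- rm r m, w <- rm r.-1 m].
Proof. by case: r => // r /= rm; rewrite ltnNge rm. Qed.

Lemma size_rm1 m : size (rm 1 m) = 2 ^ m.+1.
Proof.
elim: m => [|m IH] //; case: m IH => [|m] IH //.
by rewrite rmS // size_allpairs IH size_rm0 [in RHS]expnS mulnC.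
Qed.

Lemma size_tuples k s : size (tuples k s) = size s ^ k.
Proof. by elim: k => [|k IH] //=; rewrite size_allpairs IH expnS. Qed.

Definition mat_bounded (k L : nat) (v : mat) :=
  (size v <= k) && all (fun x : row => size x <= L) v.

Lemma msize_bounded k L v : mat_bounded k L v -> msize v <= k * L.
Proof.
elim: v k => [|x v IH] [|k] //= /andP [/= sv /andP [sx av]].
by rewrite mulSn leq_add // IH // /mat_bounded -ltnS sv.
Qed.

Lemma mat_bounded_madd k L u w : mat_bounded k L u -> mat_bounded k L (madd u w).
Proof.
elim: u w k => [|x u IH] [|y w] [|k] //= /andP [/= su /andP [sx au]].
have /andP [su' au'] : mat_bounded k L (madd u w) by rewrite IH // /mat_bounded -ltnS su.
by rewrite /mat_bounded /= ltnS su' au' andbT /xorr size_map size_zip (leq_trans (geq_minl _ _)).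
Qed.

Lemma mat_bounded_take k L h v : mat_bounded k L v -> mat_bounded k h (map (take h) v).
Proof.
rewrite /mat_bounded size_map => /andP [-> _] /=; apply/allP => _ /mapP [x _ ->].
by rewrite size_take; case: ltnP => // /ltnW.
Qed.

Lemma mat_bounded_drop k h v : mat_bounded k (h + h) v -> mat_bounded k h (map (drop h) v).
Proof.
rewrite /mat_bounded size_map => /andP [-> /allP av] /=; apply/allP => _ /mapP [x xv ->].
by rewrite size_drop leq_subLR av.
Qed.

Definition exhaustive_const (t : nat) := 2 + 2 ^ t * (3 * t + 1).

Lemma exhaustive_cost_le t m v : 0 < t -> size v <= t ->
  (exhaustive m v).2 <= exhaustive_const t * 2 ^ (m * t.+1).
Proof.
move=> t_gt0 sv; rewrite /= size_tuples size_rm1 /exhaustive_const mulnDl.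
have n_gt0 : 0 < 2 ^ m by rewrite expn_gt0.
apply: leq_add.
  by rewrite expnS -mulnA -expnD leq_mul2l leq_exp2l //; nia.
have cands : (2 ^ m.+1) ^ size v <= 2 ^ t * 2 ^ (m * t).
  by rewrite -expnM -expnD leq_exp2l //; nia.
have pass : 3 * size v * 2 ^ m + 1 <= (3 * t + 1) * 2 ^ m by nia.
rewrite mulnS expnD; have := leq_mul cands pass; nia.
Qed.

Lemma recursive_costS m r v : r != m.+1 -> r != 1 ->
  let c1 := recursive m r (map (take (2 ^ m)) v) in
  (recursive m.+1 r v).2 =
    c1.2 + (recursive m r.-1 (madd (map (drop (2 ^ m)) v) c1.1)).2 + 3 * msize v.
Proof.
move=> /negPf rm /negPf r1 /=; rewrite rm r1.
by case: (recursive m r _) => c1 k1; case: (recursive m r.-1 _).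
Qed.

Lemma recursive_one m v : 1 < m -> recursive m 1 v = exhaustive m v.
Proof. by case: m => [|[|m]]. Qed.

Definition decay (t : nat) := 2 ^ t.+1 - 1.

Lemma decay_gt0 t : 0 < decay t.
Proof. by rewrite /decay subn_gt0 -{1}(expn0 2) ltn_exp2l. Qed.

Lemma decay_bounds t : 2 ^ t <= decay t <= 3 ^ t.
Proof.
rewrite /decay; elim: t => [|t /andP [_ le3]] //.
have := expn_gt0 2 t; have := expn_gt0 3 t; rewrite !expnS in le3 *; lia.
Qed.

Lemma recursive_cost_le t m r v : 0 < t -> 0 < r <= m -> mat_bounded t (2 ^ m) v ->
  (recursive m r v).2 * decay t ^ r.-1 <=
  exhaustive_const t * 2 ^ (m * t.+1) + 6 * t * r * 2 ^ m * decay t ^ r.-1.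
Proof.
move=> t_gt0; set q := decay t.
have q1 : q + 1 = 2 ^ t.+1 by rewrite subnK ?expn_gt0.
elim: m r v => [|m IH] r v /andP [r_gt0 rm] vb; first by case: r r_gt0 rm.
have sv := msize_bounded vb.
have [-> | rSm] := eqVneq r m.+1.
  rewrite /= eqxx; apply: leq_trans (leq_addl _ _); rewrite leq_mul2r; apply/orP; right.
  by apply: leq_trans sv _; nia.
have [r1 | r_neq1] := eqVneq r 1.
  rewrite r1 recursive_one; last by move: rSm; rewrite r1 ltnS lt0n eqSS eq_sym.
  have vt : size v <= t by case/andP: vb.
  by rewrite expn0 muln1; apply: leq_trans (exhaustive_cost_le _ t_gt0 vt) (leq_addr _ _).
have r_le_m : r <= m by rewrite -ltnS ltn_neqAle rSm rm.
rewrite recursive_costS //.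
clear rSm; case: r r_gt0 rm r_le_m r_neq1 => [|[|r]] // _ _ rm _ /=.
have vb1 : mat_bounded t (2 ^ m) (map (take (2 ^ m)) v) by exact: mat_bounded_take vb.
have := IH r.+2 _ rm vb1; case: (recursive m r.+2 _) => c1 k1 /= IH1.
have vb2 : mat_bounded t (2 ^ m) (madd (map (drop (2 ^ m)) v) c1).
  by apply/mat_bounded_madd/mat_bounded_drop; rewrite addnn -mul2n -expnS.
have IH2 := IH r.+1 _ (ltnW rm) vb2.
move: (recursive m r.+1 _).2 IH2 => k2 /= IH2.
have -> : 2 ^ (m.+1 * t.+1) = 2 ^ (m * t.+1) * (q + 1) by rewrite q1 mulSn expnD mulnC.
rewrite expnS in sv *; rewrite expnS in IH1 *.
have IH2q := leq_mul (leqnn q) IH2.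
have svq := leq_mul (leqnn (3 * (q * q ^ r))) sv.
nia.
Qed.

Lemma subadditive_cost_le t m r v : 0 < r <= m -> mat_bounded t (2 ^ m) v ->
  (subadditive m r v).2 * decay 1 ^ r.-1 <=
  t * exhaustive_const 1 * 2 ^ (m * 2) + 6 * t * r * 2 ^ m * decay 1 ^ r.-1.
Proof.
move=> rm; rewrite /subadditive /= -map_comp.
elim: v t => [|x v IH] [|t] //= /andP [/= vt /andP [xm vm]].
have xb : mat_bounded 1 (2 ^ m) [:: x] by rewrite /mat_bounded /= xm.
have := recursive_cost_le (t := 1) isT rm xb; have := IH t; rewrite /mat_bounded -ltnS vt vm.
by move=> /(_ isT) vbound xbound; rewrite mulnDl; apply: leq_trans (leq_add xbound vbound) _; nia.
Qed.

Lemma cover_timeE m r v : cover_time m r v =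
  (recursive m r v).2 + (subadditive m r v).2 + 4 * msize v + 1.
Proof.
rewrite /cover_time /rm_cover; case: (recursive m r v) => a ka.
by case: (subadditive m r v) => b kb /=; rewrite /dist_cost; lia.
Qed.

Local Open Scope R_scope.

Lemma INR_muln a b : INR (a * b)%N = INR a * INR b.
Proof. by rewrite mulnE mult_INR. Qed.

Lemma INR_addn a b : INR (a + b)%N = INR a + INR b.
Proof. by rewrite addnE plus_INR. Qed.

Lemma INR_expn a k : (0 < a)%N -> INR (a ^ k)%N = exp (INR k * ln (INR a)).
Proof.
move=> a_gt0; rewrite -[exp _]/(Rpower _ _) Rpower_pow; last exact/lt_0_INR/ltP.
by elim: k => [|k IH] //; rewrite expnS INR_muln IH.
Qed.

Lemma INR_le_of_scaled (T X Z b k : nat) : (0 < b)%N ->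
  (T * b ^ k <= X + Z * b ^ k)%N -> INR T <= INR X * exp (- (INR k * ln (INR b))) + INR Z.
Proof.
move=> b_gt0 /leP /le_INR; rewrite INR_addn !INR_muln INR_expn // => le_scaled.
apply: (Rmult_le_reg_r (exp (INR k * ln (INR b)))); first exact: exp_pos.
by rewrite Rmult_plus_distr_r Rmult_assoc -exp_plus Rplus_opp_l exp_0; lra.
Qed.

Lemma exp_le_exp x y : x <= y -> exp x <= exp y.
Proof. by case/Rle_lt_or_eq_dec => [/exp_increasing/Rlt_le | ->]; [|exact: Rle_refl]. Qed.

Lemma exp_ge1 x : 0 <= x -> 1 <= exp x.
Proof. by have := exp_ineq1_le x; lra. Qed.

Lemma INR_ge1 n : (0 < n)%N -> 1 <= INR n.
Proof. by move=> /leP/le_INR. Qed.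

Lemma ln2_gt0 : 0 < ln 2.
Proof. by have := ln_lt_2; lra. Qed.

Lemma ln2_lt_ln3 : ln 2 < ln 3.
Proof. by apply: ln_increasing; lra. Qed.

Lemma ln_INR_le a b : (0 < a)%N -> (a <= b)%N -> ln (INR a) <= ln (INR b).
Proof.
move=> a_gt0 /leP/le_INR; have /ltP/lt_0_INR := a_gt0.
by move=> a_pos /Rle_lt_or_eq_dec [/(ln_increasing _ _ a_pos)/Rlt_le | ->] //; exact: Rle_refl.
Qed.

Lemma ln_INR_ge0 n : (0 < n)%N -> 0 <= ln (INR n).
Proof. by move=> n_gt0; rewrite -ln_1; exact: ln_INR_le n_gt0. Qed.

Lemma INR_pow2 m : INR (2 ^ m) = exp (INR m * ln 2).
Proof. by rewrite INR_expn. Qed.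

Lemma ln_INR_pow2 m : ln (INR (2 ^ m)) = INR m * ln 2.
Proof. by rewrite INR_pow2 ln_exp. Qed.

Lemma nlogn_pow2 m : (0 < m)%N ->
  INR (2 ^ m) * log2 (INR (2 ^ m)) = exp (INR m * ln 2 + ln (INR m)).
Proof.
move=> /ltP/lt_0_INR m_gt0; have := ln2_gt0.
by rewrite exp_plus exp_ln // /log2 ln_INR_pow2 INR_pow2 => ?; field; lra.
Qed.

Lemma ln_decay_bounds t : INR t * ln 2 <= ln (INR (decay t)) <= INR t * ln 3.
Proof.
have /andP [lo hi] := decay_bounds t.
have := ln_INR_le (expn_gt0 2 t) lo; have := ln_INR_le (decay_gt0 t) hi.
rewrite !INR_expn // !ln_exp (INR_IZR_INZ 2) (INR_IZR_INZ 3) /=; lra.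
Qed.

Lemma INR_decay t : INR (decay t) = 2 ^ (t + 1) - 1.
Proof.
rewrite /decay minus_INR; last exact/leP/expn_gt0.
by rewrite INR_expn // -Rpower_pow ?addn1 //; lra.
Qed.

Lemma beta_ln2 t : INR (t + 1) * beta t * ln 2 = ln (INR (decay t)).
Proof.
have t1 : INR (t + 1) <> 0 by rewrite addn1; exact: not_0_INR.
have := ln2_gt0; rewrite /beta /log2 ln_Rpower INR_decay => ?; field; lra.
Qed.

Lemma beta_threshold t : (0 < t)%N ->
  INR t / (INR (t + 1) * beta t) * ln (INR (decay t)) = INR t * ln 2.
Proof.
move=> t_gt0; have l2 := ln2_gt0; have [lo _] := ln_decay_bounds t.
have /leP/le_INR t1 : (1 <= t)%N by [].
have : 0 < ln (INR (decay t)) by rewrite /= in t1; nra.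
rewrite -beta_ln2 => lq_gt0; field; split; nra.
Qed.

(* Powers b^x are written exp (x * ln b), so that every regime below reduces to
   linear inequalities between exponents. *)
Definition cover_bound (t m r : nat) : R :=
  INR (exhaustive_const t) * exp (INR m * (INR t + 1) * ln 2 - (INR r - 1) * ln (INR (decay t)))
  + 10 * INR t * exp (INR m * 2 * ln 2 - (INR r - 1) * ln 3)
  + (12 * INR t * INR r + 4 * INR t) * exp (INR m * ln 2) + 1.

Lemma cover_time_le_bound t m r v : (0 < t)%N -> (0 < r <= m)%N -> is_input t m v ->
  INR (cover_time m r v) <= cover_bound t m r.
Proof.
move=> t_gt0 rm [vt vm].
have vb : mat_bounded t (2 ^ m) v by rewrite /mat_bounded vt leqnn; apply: sub_all vm => x /eqP ->.
have rec := INR_le_of_scaled (decay_gt0 t) (recursive_cost_le t_gt0 rm vb).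
have sub := INR_le_of_scaled (decay_gt0 1) (subadditive_cost_le rm vb).
have /leP/le_INR ms := msize_bounded vb.
have r1 : INR r.-1 = INR r - 1.
  by rewrite -subn1 minus_INR //; apply/leP; case/andP: rm.
rewrite cover_timeE 3!INR_addn INR_muln.
rewrite !INR_muln !INR_expn // r1 in rec sub ms.
rewrite (_ : exhaustive_const 1 = 10%N) // (_ : decay 1 = 3%N) // in sub.
rewrite !INR_muln S_INR in rec sub.
(* [INR n] unfolds to [1 + ... + 1]; going through [IZR] yields the numerals. *)
rewrite !(INR_IZR_INZ 2) !(INR_IZR_INZ 3) (INR_IZR_INZ 6) (INR_IZR_INZ 10) in rec sub ms.
rewrite (INR_IZR_INZ 4) (INR_IZR_INZ 1) /cover_bound.
cbn [Z.of_nat Pos.of_succ_nat Pos.succ] in rec, sub, ms |- *.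
have ms4 := Rmult_le_compat_l 4 _ _ ltac:(lra) ms.
apply: (Rle_trans _ _ _ (Rplus_le_compat_r 1 _ _ (Rplus_le_compat _ _ _ _ (Rplus_le_compat _ _ _ _ rec sub) ms4))).
by rewrite /Rminus !exp_plus; right; ring.
Qed.

Lemma cover_bound_le_exp t m r E c1 c2 c3 :
  INR m * (INR t + 1) * ln 2 - (INR r - 1) * ln (INR (decay t)) <= E + c1 ->
  INR m * 2 * ln 2 - (INR r - 1) * ln 3 <= E + c2 ->
  (12 * INR t * INR r + 4 * INR t) * exp (INR m * ln 2) + 1 <= c3 * exp E ->
  cover_bound t m r <= (INR (exhaustive_const t) * exp c1 + 10 * INR t * exp c2 + c3) * exp E.
Proof.
move=> /exp_le_exp e1 /exp_le_exp e2 lin.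
have := Rmult_le_compat_l _ _ _ (pos_INR (exhaustive_const t)) e1.
have := Rmult_le_compat_l (10 * INR t) _ _ ltac:(have := pos_INR t; lra) e2.
move=> le2 le1; rewrite /cover_bound Rplus_assoc.
apply: (Rle_trans _ _ _ (Rplus_le_compat _ _ _ _ (Rplus_le_compat _ _ _ _ le1 le2) lin)).
by rewrite !exp_plus; right; ring.
Qed.

Lemma linear_term_le_nlogn t m r : (0 < r <= m)%N ->
  (12 * INR t * INR r + 4 * INR t) * exp (INR m * ln 2) + 1
    <= (16 * INR t + 1) * exp (INR m * ln 2 + ln (INR m)).
Proof.
case/andP=> /INR_ge1 r1 /leP/le_INR rm; have l2 := ln2_gt0; have t0 := pos_INR t.
rewrite exp_plus exp_ln; last lra.
have X1 : 1 <= exp (INR m * ln 2) by apply: exp_ge1; nra.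
have tX : 0 <= INR t * exp (INR m * ln 2) by nra.
nra.
Qed.

Section Regimes.

Variable t : nat.
Hypothesis t_gt0 : (0 < t)%N.

Local Notation lq := (ln (INR (decay t))).

Let ln_facts :
  [/\ 0 < ln 2, ln 2 < ln 3, 1 <= INR t, INR t * ln 2 <= lq & lq <= INR t * ln 3].
Proof.
have [lo hi] := ln_decay_bounds t.
by split => //; [exact: ln2_gt0 | exact: ln2_lt_ln3 | exact: INR_ge1].
Qed.

Let ln_decay_gt0 : 0 < lq.
Proof. by have [l2 _ t1 lo _] := ln_facts; nra. Qed.

Lemma cover_bound_fixed_r r : (0 < r)%N ->
  exists C, forall m, (r <= m)%N -> cover_bound t m r <= C * Rpower (INR (2 ^ m)) (INR (t + 1)).
Proof.
move=> /INR_ge1 r1; have [l2 l23 t1 lo hi] := ln_facts; have lq0 := ln_decay_gt0.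
exists (INR (exhaustive_const t) * exp 0 + 10 * INR t * exp 0 + (12 * INR t * INR r + 4 * INR t + 1)).
move=> m /leP/le_INR rm; rewrite /Rpower ln_INR_pow2 INR_addn [INR 1]/=.
have mL2 : 0 <= INR m * ln 2 by have := pos_INR m; nra.
apply: cover_bound_le_exp; rewrite ?Rplus_0_r; try nra.
have P1 : 1 <= exp ((INR t + 1) * (INR m * ln 2)) by apply: exp_ge1; nra.
have XP : exp (INR m * ln 2) <= exp ((INR t + 1) * (INR m * ln 2)) by apply: exp_le_exp; nra.
have c0 : 0 <= 12 * INR t * INR r + 4 * INR t by nra.
have := Rmult_le_compat_l _ _ _ c0 XP; nra.
Qed.

Lemma cover_bound_linear_r_small alpha : alpha < INR t / (INR (t + 1) * beta t) ->
  exists C, forall m r, (0 < r <= m)%N -> Rabs (INR r - alpha * INR m) < 1 ->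
    cover_bound t m r <= C * Rpower (INR (2 ^ m)) (INR (t + 1) * (1 - alpha * beta t)).
Proof.
move=> /(Rmult_lt_compat_r lq _ _ ln_decay_gt0); rewrite beta_threshold //.
have [l2 l23 t1 lo hi] := ln_facts; have lq0 := ln_decay_gt0 => alpha_lt.
set d := INR t * ln 2 - alpha * lq; have d_gt0 : 0 < d by rewrite /d; lra.
exists (INR (exhaustive_const t) * exp (2 * lq) + 10 * INR t * exp (2 * ln 3)
        + (4 * INR t + 1 + 12 * INR t / d)).
move=> m r /andP [/INR_ge1 r1 /leP/le_INR rm] /Rabs_def2 [r_lt r_gt].
have m0 := pos_INR m; have alpha0 : 0 <= alpha by nra.
have -> : Rpower (INR (2 ^ m)) (INR (t + 1) * (1 - alpha * beta t)) = exp (INR m * ln 2 + INR m * d).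
  by rewrite /Rpower ln_INR_pow2 /d -(beta_ln2 t) INR_addn [INR 1]/=; congr exp; ring.
apply: cover_bound_le_exp.
- by rewrite /d; nra.
- have alpha_ln3 : alpha * (lq - ln 3) <= (INR t - 1) * ln 2.
    apply: (Rmult_le_reg_l (INR t)); nra.
  have := Rmult_le_compat_l (INR m) _ _ m0 alpha_ln3; rewrite /d; nra.
- have X1 : 1 <= exp (INR m * ln 2) by apply: exp_ge1; nra.
  have tdm : 0 <= 12 * INR t / d by apply: Rle_mult_inv_pos; lra.
  have lin : 12 * INR t * INR m + 4 * INR t + 1 <= (4 * INR t + 1 + 12 * INR t / d) * exp (INR m * d).
    have cd : 12 * INR t / d * (INR m * d) = 12 * INR t * INR m by field; lra.
    have md : 0 <= INR m * d by nra.
    have := exp_ineq1_le (INR m * d); nra.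
  have trX : 0 <= INR t * ((INR m - INR r) * exp (INR m * ln 2)).
    by apply: Rmult_le_pos; nra.
  have := Rmult_le_compat_l _ _ _ (Rle_trans _ _ _ Rle_0_1 X1) lin.
  rewrite exp_plus; nra.
Qed.

Lemma cover_bound_top_r s : exists C, forall m, (s < m)%N ->
  cover_bound t m (m - s) <= C * INR (2 ^ m) * log2 (INR (2 ^ m)).
Proof.
have [l2 l23 t1 lo hi] := ln_facts.
exists (INR (exhaustive_const t) * exp ((INR s + 1) * lq)
        + 10 * INR t * exp ((INR s + 1) * ln 3) + (16 * INR t + 1)) => m sm.
have m_gt0 : (0 < m)%N by apply: leq_ltn_trans sm.
have lnm := ln_INR_ge0 m_gt0; have /leP/le_INR sm' := sm; rewrite S_INR in sm'.
rewrite Rmult_assoc nlogn_pow2 //; apply: cover_bound_le_exp.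
- rewrite minus_INR; last exact/leP/ltnW.
  have := Rmult_le_compat_l (INR m) _ _ (pos_INR m) lo; nra.
- rewrite minus_INR; last exact/leP/ltnW.
  have := Rmult_le_compat_l (INR m) _ _ (pos_INR m) (Rlt_le _ _ l23); nra.
- by apply: linear_term_le_nlogn; rewrite subn_gt0 sm leq_subr.
Qed.

Lemma cover_bound_linear_r_large alpha : INR t / (INR (t + 1) * beta t) <= alpha ->
  exists C, forall m r, (0 < r <= m)%N -> Rabs (INR r - alpha * INR m) < 1 ->
    cover_bound t m r <= C * INR (2 ^ m) * log2 (INR (2 ^ m)).
Proof.
move=> /(Rmult_le_compat_r lq _ _ (Rlt_le _ _ ln_decay_gt0)); rewrite beta_threshold //.
have [l2 l23 t1 lo hi] := ln_facts; have lq0 := ln_decay_gt0 => t_le_alpha.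
have alpha_ln3 : ln 2 <= alpha * ln 3 by nra.
exists (INR (exhaustive_const t) * exp (2 * lq) + 10 * INR t * exp (2 * ln 3) + (16 * INR t + 1)).
move=> m r rm /Rabs_def2 [r_lt r_gt].
have m_gt0 : (0 < m)%N by case/andP: rm => /leq_trans; apply.
have lnm := ln_INR_ge0 m_gt0; have m0 := pos_INR m.
rewrite Rmult_assoc nlogn_pow2 //; apply: cover_bound_le_exp.
- have := Rmult_le_compat_l (INR m) _ _ m0 t_le_alpha; nra.
- have := Rmult_le_compat_l (INR m) _ _ m0 alpha_ln3; nra.
- exact: linear_term_le_nlogn.
Qed.

End Regimes.

Theorem corollary23 (t : nat) : (0 < t)%N ->
  (* r constant: O(n^(t+1)) *)
  (forall r : nat, (1 <= r)%N ->
     exists (C : R) (M : nat), forall (m : nat) (v : mat),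
       (M <= m)%N -> (r <= m)%N -> is_input t m v ->
       (INR (cover_time m r v) <= C * Rpower (INR (2 ^ m)%N) (INR (t + 1)%N))) /\
  (* r = alpha m, 0 < alpha < t/((t+1) beta): O(n^((t+1)(1 - alpha beta))) *)
  (forall alpha : R,
     (0 < alpha < INR t / (INR (t + 1)%N * beta t)) ->
     exists (C : R) (M : nat), forall (m r : nat) (v : mat),
       (M <= m)%N -> (1 <= r <= m)%N ->
       (Rabs (INR r - alpha * INR m) < 1) -> is_input t m v ->
       (INR (cover_time m r v)
          <= C * Rpower (INR (2 ^ m)%N) (INR (t + 1)%N * (1 - alpha * beta t)))) /\
  (* r = m - s, s constant: O(n log n) *)
  (forall s : nat,
     exists (C : R) (M : nat), forall (m : nat) (v : mat),
       (M <= m)%N -> is_input t m v ->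
       (INR (cover_time m (m - s) v) <= C * INR (2 ^ m)%N * log2 (INR (2 ^ m)%N))) /\
  (* r = alpha m, t/((t+1) beta) <= alpha < 1: O(n log n) *)
  (forall alpha : R,
     (INR t / (INR (t + 1)%N * beta t) <= alpha < 1) ->
     exists (C : R) (M : nat), forall (m r : nat) (v : mat),
       (M <= m)%N -> (1 <= r <= m)%N ->
       (Rabs (INR r - alpha * INR m) < 1) -> is_input t m v ->
       (INR (cover_time m r v) <= C * INR (2 ^ m)%N * log2 (INR (2 ^ m)%N))).
Proof.
move=> t_gt0; split; [|split; [|split]].
- move=> r r_gt0; have [C bound] := cover_bound_fixed_r t_gt0 r_gt0.
  exists C, 0%N => m v _ rm v_in.
  have rm' : (0 < r <= m)%N by rewrite r_gt0.
  exact: Rle_trans _ _ _ (cover_time_le_bound t_gt0 rm' v_in) (bound m rm).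
- move=> alpha [_ small]; have [C bound] := cover_bound_linear_r_small t_gt0 small.
  exists C, 0%N => m r v _ rm near v_in.
  exact: Rle_trans _ _ _ (cover_time_le_bound t_gt0 rm v_in) (bound m r rm near).
- move=> s; have [C bound] := cover_bound_top_r t_gt0 s.
  exists C, s.+1 => m v sm v_in.
  have rm : (0 < m - s <= m)%N by rewrite subn_gt0 sm leq_subr.
  exact: Rle_trans _ _ _ (cover_time_le_bound t_gt0 rm v_in) (bound m sm).
- move=> alpha [large _]; have [C bound] := cover_bound_linear_r_large t_gt0 large.
  exists C, 0%N => m r v _ rm near v_in.
  exact: Rle_trans _ _ _ (cover_time_le_bound t_gt0 rm v_in) (bound m r rm near).
Qed.
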